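(* Consider one group of $p'$ PEs holding locally sorted string arrays $S_0',\dots,S_{p'-1}'$ with concatenation $S'$, partitioned into $r$ buckets by string-based regular sampling with sampling factor $v>0$, where $\omega=|S'|/(p'(v+1))$ need not be an integer and samples are drawn with spacing $\lceil\omega\rceil$. If $k\ge1$ and $|S'|=\Omega(p'(v+1)k)$, then every bucket $B^j$ contains at most $\bigl(1+\frac{r}{v}\bigr)\bigl(1+\frac1k\bigr)\frac{|S'|}{r}$ strings.
   Context: String-based regular sampling with sampling factor $v$ (where $r$ divides $p'$): $p'(v+1)$ samples (possibly overlapping) are drawn from the sorted local arrays such that on each PE at most $\lceil\omega\rceil$ strings lie between two consecutive local samples, where $\omega=|S'|/(p'(v+1))$; PE $i$'s samples are $V_i$. The union $V$ of all samples is sorted and splitters $f_j=V[j|V|/r-1]$ for $0<j<r$ are chosen, $f_0=-\infty$, $f_r=\infty$. Buckets are $B^j=\bigcup_i\{s\in S_i':f_j<s\le f_{j+1}\}$, $j=0,\dots,r-1$. *)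

From HB Require Import structures.
From mathcomp Require Import all_boot all_order all_algebra.
From mathcomp Require Import reals.
Set Implicit Arguments. Unset Strict Implicit. Unset Printing Implicit Defensive.
Import Order.TTheory GRing.Theory Num.Theory.

(* Strings are modelled as elements of an arbitrary totally ordered type T
   (e.g. strings with the lexicographic order).  Samples of PE i are given by their
   positions idx i (0-based indices into S i). *)

Section Sampling.
Context {d : Order.disp_t} {T : orderType d} {p : nat}.
Implicit Types (S : 'I_p -> seq T) (idx : 'I_p -> seq nat).
Local Open Scope order_scope.

Definition total_size S : nat := (\sum_(i < p) size (S i))%N.

Definition local_samples S idx (i : 'I_p) : seq T :=
  match S i with
  | [::] => [::]
  | x :: _ => [seq nth x (S i) a | a <- idx i]
  end.

Definition sorted_samples S idx : seq T :=
  sort <=%O (flatten [seq local_samples S idx i | i <- enum 'I_p]).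

(* Valid regular sampling with spacing c (= ceil omega): the sample positions
   of PE i are valid, nondecreasing (so possibly overlapping), and at most c
   strings lie between two consecutive local samples, where the array
   boundaries act as sentinels: the segments [0, a_1], (a_t, a_{t+1}],
   (a_m, |S_i| - 1] have at most c strings each.  Here this is expressed as:
   the sequence 0, a_1+1, ..., a_m+1, |S_i| is nondecreasing with consecutive
   differences at most c. *)
Definition local_sampling_ok (c : int) (n : nat) (a : seq nat) : Prop :=
  let b := 0%N :: rcons (map S a) n in
  sorted leq b /\ all (fun x => x < n)%N a /\
  forall t, (t.+1 < size b)%N -> ((nth 0 b t.+1 - nth 0 b t)%:Z <= c)%R.

(* membership of string s in bucket B^j : f_j < s <= f_{j+1}, with
   f_0 = -oo, f_r = +oo and f_j = V[j |V|/r - 1] for 0 < j < r *)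
Definition in_bucket S idx (r : nat) (j : nat) (s : T) : bool :=
  let V := sorted_samples S idx in
  match V with
  | [::] => true
  | x :: _ =>
    let f t := nth x V (t * (size V %/ r) - 1)%N in
    ((j == 0)%N || (f j < s)) && ((j.+1 == r)%N || (s <= f j.+1))
  end.

Definition bucket_size S idx (r j : nat) : nat :=
  (\sum_(i < p) count (in_bucket S idx r j) (S i))%N.

End Sampling.

From HB Require Import structures.
From mathcomp Require Import all_boot all_order all_algebra.
From mathcomp Require Import reals.
From mathcomp Require Import zify ring lra.
Import Order.TTheory GRing.Theory Num.Theory.

Set Implicit Arguments.
Unset Strict Implicit.
Unset Printing Implicit Defensive.

(* Buckets are intervals of the string order, so on every PE the strings of
   B^j form a contiguous slice of the sorted local array.  Consecutive local
   samples are at most c = ceil(omega) positions apart, hence a slice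
   containing t distinct samples has at most c (t + 1) strings.  As all strings
   are distinct, samples of different PEs are distinct elements of V, and the
   distinct samples inside B^j occupy positions j m, ..., (j + 1) m - 1 of V,
   where m = |V| / r.  Therefore |B^j| <= c (|V| / r + p') with
   |V| = p'(v + 1), and c <= omega + 1 together with |S'| >= p'(v + 1) k turns
   this into the claimed bound. *)

Section SortedSlices.
Context {d : Order.disp_t} {T : orderType d}.
Implicit Types (s : seq T) (P : pred T).

Definition order_convex P :=
  forall x y z, (x <= y)%O -> (y <= z)%O -> P x -> P z -> P y.

Lemma sorted_convex_slice P x0 s : order_convex P -> sorted <=%O s ->
  exists l u, [/\ l <= u <= size s, count P s = u - l &
    forall t, t < size s -> P (nth x0 s t) = (l <= t < u)].
Proof.
move=> Pconv; elim: s => [|h s IH] hs_sorted; first by exists 0, 0.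
have [l [u [/andP[lu us] countP slice]]] := IH (path_sorted hs_sorted).
have hs_le i j : i <= j <= size s -> (nth x0 (h :: s) i <= nth x0 (h :: s) j)%O.
  by move=> /andP[ij js]; apply: (le_sorted_leq_nth x0 hs_sorted); rewrite ?inE /=; lia.
case Ph: (P h); last first.
  exists l.+1, u.+1; split=> /=; [lia | rewrite Ph countP; lia |].
  by case=> [|t] //= ts; rewrite slice.
have [lu'|ul] := ltnP l u; last first.
  exists 0, 1; split=> /=; [lia | rewrite Ph countP; lia |].
  by case=> [|t] //= ts; rewrite slice //; lia.
have l0 : l = 0.
  apply/eqP; rewrite -leqn0 leqNgt; apply/negP => l_gt0.
  have : P (nth x0 s 0).
    apply: (Pconv h _ (nth x0 s l)) Ph _; first by apply: (hs_le 0 1); lia.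
      by apply: (hs_le 1 l.+1); lia.
    by rewrite slice //; lia.
  by rewrite slice /=; lia.
exists 0, u.+1; split=> /=; [lia | rewrite Ph countP; lia |].
by case=> [|t] //= ts; rewrite slice // l0.
Qed.

Lemma sorted_nth_lt_index x0 s i x : sorted <=%O s -> i < size s ->
  (nth x0 s i < x)%O -> i < index x s.
Proof.
move=> s_sorted i_lt nth_lt; rewrite ltnNge; apply/negP => idx_le.
have x_in : x \in s by rewrite -index_mem (leq_ltn_trans idx_le).
move: nth_lt; rewrite ltNge -[leLHS](nth_index x0 x_in).
by rewrite (le_sorted_leq_nth x0 s_sorted) // inE index_mem.
Qed.

Lemma sorted_index_le_nth x0 s i x : sorted <=%O s -> x \in s -> i < size s ->
  (x <= nth x0 s i)%O -> index x s <= i.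
Proof.
move=> s_sorted x_in i_lt le_nth; rewrite leqNgt; apply/negP => i_lt_idx.
have nth_le : (nth x0 s i <= x)%O.
  rewrite -[leRHS](nth_index x0 x_in) (le_sorted_leq_nth x0 s_sorted) ?inE ?index_mem //.
  exact: ltnW.
have nth_eq : nth x0 s i = x by apply/le_anti; rewrite nth_le le_nth.
by have := index_nth x0 i_lt; rewrite nth_eq leqNgt i_lt_idx.
Qed.

End SortedSlices.

Definition bounded_step (c : nat) : rel nat := [rel x y | x <= y <= x + c].

Lemma interval_le_bounded_step_path c h b l u :
  path (bounded_step c) h b -> h <= l -> l <= u -> u <= last h b ->
  u - l <= c * (size (undup [seq x <- b | l < x < u]) + 1).
Proof.
elim: b h l => [|h' b IH] h l /=; first by move=> _ hl lu uh; lia.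
move=> /andP[/andP[hh' h'c] b_path] hl lu ub.
have [h'l|lh'] := leqP h' l; first exact: IH h' l b_path h'l lu ub.
have [uh'|h'u] := leqP u h'; first by rewrite mulnDr muln1; lia.
have IH' := IH h' h' b_path (leqnn _) (ltnW h'u) ub.
set Y := undup _ in IH'; set X := undup _.
have YX : (size Y).+1 <= size X.
  rewrite -[(size Y).+1]/(size (h' :: Y)); apply: uniq_leq_size.
    by rewrite /= undup_uniq mem_undup mem_filter ltnn.
  move=> x; rewrite inE !mem_undup /= inE mem_filter.
  case/orP=> [-> //|/andP[/andP[h'x xu] xb]].
  by rewrite mem_filter xb xu (ltn_trans lh' h'x) orbT.
apply: (@leq_trans (c * (size Y + 1) + c)); first lia.
by rewrite -mulnSr leq_mul2l ltn_add2r YX orbT.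
Qed.

Lemma count_le_samples {d : Order.disp_t} {T : orderType d}
    c (P : pred T) x0 (s : seq T) (a : seq nat) :
  order_convex P -> sorted <=%O s -> uniq s ->
  local_sampling_ok c%:Z (size s) a ->
  count P s <= c * (size (undup [seq y <- [seq nth x0 s i | i <- a] | P y]) + 1).
Proof.
move=> Pconv s_sorted s_uniq [b_sorted [_ gaps]].
have [l [u [/andP[lu us] -> slice]]] := sorted_convex_slice x0 Pconv s_sorted.
set b := rcons _ _ in b_sorted gaps.
have b_path : path (bounded_step c) 0 b.
  apply/(pathP 0) => t tb; apply/andP; split.
    exact: (pathP 0 b_sorted).
  have : nth 0 b t - nth 0 (0 :: b) t <= c by rewrite -lez_nat; exact: gaps.
  lia.
have := interval_le_bounded_step_path b_path (leq0n l) lu.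
rewrite last_rcons => /(_ us) /leq_trans; apply.
rewrite leq_mul2l leq_add2r; apply/orP; right.
set X := undup _.
(* [b] lists the sample positions shifted by one, so [x] in [X] is sample [x.-1]. *)
have memX (x : nat) : x \in X -> [/\ 0 < x, l <= x.-1 < u & x.-1 \in a].
  rewrite mem_undup mem_filter mem_rcons inE.
  by case/andP=> lxu /orP[/eqP xs|/mapP[i ia xi]]; subst x; [lia | split=> //; lia].
have f_inj (x y : nat) : x \in X -> y \in X -> nth x0 s x.-1 = nth x0 s y.-1 -> x = y.
  move=> /memX[x_gt0 /andP[_ xu] _] /memX[y_gt0 /andP[_ yu] _] /eqP.
  rewrite nth_uniq ?(leq_trans xu us) ?(leq_trans yu us) //.
  by rewrite -eqSS !prednK // => /eqP.
rewrite -(size_map (fun x : nat => nth x0 s x.-1) X); apply: uniq_leq_size.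
  by rewrite map_inj_in_uniq ?undup_uniq.
move=> _ /mapP[x /memX[_ xlu xa] ->].
by rewrite mem_undup mem_filter slice ?map_f //; lia.
Qed.

Lemma size_undup_flatten_disjoint (I : eqType) (T : eqType) (js : seq I)
    (A L : I -> seq T) :
  uniq (flatten [seq A i | i <- js]) -> (forall i, {subset L i <= A i}) ->
  \sum_(i <- js) size (undup (L i)) = size (undup (flatten [seq L i | i <- js])).
Proof.
move=> + LA; elim: js => [|i js IH] /=; first by rewrite big_nil.
rewrite cat_uniq big_cons => /and3P[_ disj uniq_js].
rewrite undup_cat size_cat IH //; congr (_ + _).
have /all_filterP -> // : all (fun x => x \notin flatten [seq L j | j <- js]) (undup (L i)).
apply/allP => x; rewrite mem_undup => /LA xA.
apply/negP => /flattenP[_ /mapP[k kjs ->] /LA xAk].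
have xAs : x \in flatten [seq A j | j <- js] by apply/flattenP; exists (A k); rewrite ?map_f.
by move/hasPn/(_ x xAs): disj; rewrite xA.
Qed.

Lemma uniq_flatten_mem (T : eqType) (ss : seq (seq T)) s :
  uniq (flatten ss) -> s \in ss -> uniq s.
Proof.
elim: ss => //= t ss IH; rewrite cat_uniq inE => /and3P[ut _ uss].
by case/orP=> [/eqP -> //|/(IH uss)].
Qed.

Section Buckets.
Context {d : Order.disp_t} {T : orderType d} {p : nat}.
Variables (S : 'I_p -> seq T) (idx : 'I_p -> seq nat).

Lemma in_bucket_convex r j : order_convex (in_bucket S idx r j).
Proof.
move=> x y z xy yz; rewrite /in_bucket; case: (sorted_samples S idx) => // x0 V.
move=> /andP[lo_x _] /andP[_ hi_z]; apply/andP; split.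
  by case/orP: lo_x => [->//|f_x]; rewrite (lt_le_trans f_x xy) orbT.
by case/orP: hi_z => [->//|z_f]; rewrite (le_trans yz z_f) orbT.
Qed.

Lemma size_undup_bucket_samples r j :
  r %| size (sorted_samples S idx) -> j < r ->
  size (undup [seq s <- sorted_samples S idx | in_bucket S idx r j s])
    <= size (sorted_samples S idx) %/ r.
Proof.
have : sorted <=%O (sorted_samples S idx) by apply: sort_sorted; exact: le_total.
rewrite /in_bucket; case: (sorted_samples S idx) => [|x0 V'] //.
set V := x0 :: V'; set m := size V %/ r => V_sorted r_dvd jr.
have Vm : size V = m * r by rewrite divnK.
have m_gt0 : 0 < m by rewrite divn_gt0 ?(leq_ltn_trans (leq0n j) jr) // dvdn_leq.
clearbody m.
have jm_le : j * m + m <= size V by rewrite Vm -mulSnr mulnC leq_mul2l jr orbT.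
set U := undup _.
rewrite -(size_iota (j * m) m) -(size_map (index^~ V) U); apply: uniq_leq_size.
  rewrite map_inj_in_uniq ?undup_uniq // => x y.
  rewrite !mem_undup !mem_filter => /andP[_ xV] /andP[_ yV] e.
  by rewrite -(nth_index x0 xV) e nth_index.
move=> i /mapP[s]; rewrite mem_undup mem_filter => /andP[/andP[lo hi] sV] ->.
have sV_lt : index s V < size V by rewrite index_mem.
rewrite mem_iota; apply/andP; split.
  have jm1_lt : j * m - 1 < size V by lia.
  case/orP: lo => [/eqP -> //|/(sorted_nth_lt_index V_sorted jm1_lt)].
  by rewrite subn1; apply: leq_trans (leqSpred _).
case/orP: hi => [/eqP j1r|]; first by move: sV_lt; rewrite Vm -j1r mulnC mulSnr.
have jm1_lt : j * m + m - 1 < size V by lia.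
rewrite mulSnr => /(sorted_index_le_nth V_sorted sV jm1_lt) idx_le.
by apply: leq_ltn_trans idx_le _; rewrite subn1 ltn_predL addn_gt0 m_gt0 orbT.
Qed.

Lemma local_samples_sub i : {subset local_samples S idx i <= S i}.
Proof.
rewrite /local_samples; case: (S i) => [|x s] // _ /mapP[y _ ->].
have [y_lt|y_ge] := ltnP y (size (x :: s)); first exact: mem_nth.
by rewrite nth_default // mem_head.
Qed.

Lemma size_sorted_samples :
  (forall i, all (fun y => y < size (S i)) (idx i)) ->
  size (sorted_samples S idx) = \sum_(i < p) size (idx i).
Proof.
move=> idx_lt; rewrite size_sort size_flatten /shape -map_comp sumnE big_map big_enum.
apply: eq_bigr => i _ /=; rewrite /local_samples.
case E: (S i) => [|x s]; last by rewrite size_map.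
by have := idx_lt i; rewrite E; case: (idx i).
Qed.

Lemma count_in_bucket_le c r j i :
  sorted <=%O (S i) -> uniq (S i) -> local_sampling_ok c%:Z (size (S i)) (idx i) ->
  count (in_bucket S idx r j) (S i)
    <= c * (size (undup [seq s <- local_samples S idx i | in_bucket S idx r j s]) + 1).
Proof.
rewrite /local_samples; case: (S i) => [|x s] // s_sorted s_uniq ok.
by apply: (count_le_samples x) => //; exact: in_bucket_convex.
Qed.

Lemma bucket_size_le c r j :
  (forall i, sorted <=%O (S i)) -> uniq (flatten [seq S i | i <- enum 'I_p]) ->
  (forall i, local_sampling_ok c%:Z (size (S i)) (idx i)) ->
  bucket_size S idx r j
    <= c * (size (undup [seq s <- sorted_samples S idx | in_bucket S idx r j s]) + p).
Proof.
move=> S_sorted S_uniq ok; set P := in_bucket S idx r j.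
set L := fun i => [seq s <- local_samples S idx i | P s].
have S_i_uniq i : uniq (S i) by apply: uniq_flatten_mem S_uniq _; rewrite map_f ?mem_enum.
apply: (@leq_trans (\sum_(i < p) c * (size (undup (L i)) + 1))).
  by apply: leq_sum => i _; apply: count_in_bucket_le.
rewrite -big_distrr big_split /= sum1_card card_ord leq_mul2l leq_add2r; apply/orP; right.
have L_sub i : {subset L i <= S i}.
  by move=> s; rewrite mem_filter => /andP[_ /local_samples_sub].
rewrite -big_enum (size_undup_flatten_disjoint S_uniq L_sub).
apply: uniq_leq_size; first exact: undup_uniq.
move=> s; rewrite !mem_undup => /flattenP[_ /mapP[i _ ->]].
rewrite mem_filter => /andP[Ps s_i]; rewrite mem_filter Ps mem_sort.
by apply/flattenP; exists (local_samples S idx i); rewrite ?map_f ?mem_enum.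
Qed.

End Buckets.

Local Open Scope ring_scope.

Lemma bucket_bound_arith (R : realFieldType) (N P p r v k : R) :
  0 < p -> 0 < r -> 0 < v -> 1 <= k -> P = p * (v + 1) -> P * k <= N ->
  (N / P + 1) * (P / r + p) <= (1 + r / v) * (1 + k^-1) * (N / r).
Proof.
move=> p_gt0 r_gt0 v_gt0 k_ge1 PE PkN.
have P_gt0 : 0 < P by rewrite PE mulr_gt0 //; lra.
have N_ge0 : 0 <= N by apply: le_trans PkN; rewrite mulr_ge0 //; lra.
have -> : (N / P + 1) * (P / r + p) = (N + P) / r * (1 + r / (v + 1)).
  by rewrite PE; field; rewrite !lt0r_neq0 //; lra.
have -> : (1 + r / v) * (1 + k^-1) * (N / r) = N * (1 + k^-1) / r * (1 + r / v).
  by field; rewrite !lt0r_neq0 //; lra.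
apply: ler_pM.
- by rewrite divr_ge0 //; lra.
- by rewrite addr_ge0 // divr_ge0 //; lra.
- rewrite ler_pM2r ?invr_gt0 // mulrDr mulr1 lerD2l.
  by rewrite -(ler_pM2r (lt_le_trans ltr01 k_ge1)) mulfVK ?gt_eqF //; lra.
- by rewrite lerD2l ler_pM2l // lef_pV2 ?posrE; lra.
Qed.

Theorem theorem16 (R : realType) (d : Order.disp_t) (T : orderType d)
  (p r v : nat) (S : 'I_p -> seq T) (idx : 'I_p -> seq nat) (k : R) :
  (0 < p)%N -> (0 < r)%N -> (r %| p)%N -> (0 < v)%N ->
  (forall i, sorted <=%O (S i)) ->
  uniq (flatten [seq S i | i <- enum 'I_p]) ->
  (\sum_(i < p) size (idx i))%N = (p * v.+1)%N ->
  (forall i, local_sampling_ok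
     (Num.ceil ((total_size S)%:R / (p * v.+1)%:R : R)) (size (S i)) (idx i)) ->
  1 <= k ->
  (p * v.+1)%:R * k <= (total_size S)%:R ->
  forall j : 'I_r,
    (bucket_size S idx r j)%:R
      <= (1 + r%:R / v%:R) * (1 + k^-1) * ((total_size S)%:R / r%:R).
Proof.
move=> p_gt0 r_gt0 r_dvd_p v_gt0 S_sorted S_uniq idx_size ok k_ge1 PkN j.
set N := total_size S; set omega := N%:R / (p * v.+1)%:R : R.
have omega_ge0 : 0 <= omega by rewrite divr_ge0.
set c := `|Num.ceil omega|%N.
have ceilE : Num.ceil omega = c%:Z.
  by rewrite /c abszE ger0_norm // ceil_ge0 (lt_le_trans _ omega_ge0) ?ltrN10.
have c_le : c%:R <= omega + 1.
  by have := ceilB1_lt omega; rewrite ceilE intrB /= -[(c%:Z)%:~R]/(c%:R : R); lra.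
have ok_c i : local_sampling_ok c%:Z (size (S i)) (idx i) by rewrite -ceilE.
have V_size : size (sorted_samples S idx) = (p * v.+1)%N.
  by rewrite size_sorted_samples // => i; have [_ []] := ok_c i.
have r_dvd_P : (r %| p * v.+1)%N by rewrite dvdn_mulr.
have Bj : (bucket_size S idx r j <= c * ((p * v.+1) %/ r + p))%N.
  apply: leq_trans (bucket_size_le r j S_sorted S_uniq ok_c) _.
  by rewrite leq_mul2l leq_add2r -V_size size_undup_bucket_samples ?orbT // V_size.
have PE : (p * v.+1)%:R = p%:R * (v%:R + 1) :> R by rewrite natrM natr1.
apply: le_trans (bucket_bound_arith _ _ _ k_ge1 PE PkN); rewrite ?ltr0n //.
apply: (@le_trans _ _ (c%:R * (((p * v.+1) %/ r)%:R + p%:R))).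
  by rewrite -natrD -natrM ler_nat.
rewrite (natf_div _ r_dvd_P); apply: ler_wpM2r c_le.
by rewrite addr_ge0 ?divr_ge0.
Qed.
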